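(* Let $q\in\mathbb{N}$, $q\ge1$, and let $F=(n_F)_{n\ge0}$ be defined by $0_F=0$, $1_F=1$, $2_F=q$, and $(j+2)_F=q\,(j+1)_F+j_F$ for $j\ge0$ (e.g. $q=2$ gives $1,2,5,12,29,70,\dots$ and $q=3$ gives $1,3,10,33,109,\dots$ from $n=1$). Then for all integers $0\le k<n$, the layer $\langle\Phi_{k+1}\to\Phi_n\rangle$ of the cobweb poset of $F$ (with $m=n-k$ levels) admits a tiling by blocks of type $\sigma P_m$.
   Context: Notation: $n_F\equiv F_n$. The cobweb poset of $F$ has, for each $s\ge1$, a level $\Phi_s$ consisting of $s_F$ distinct vertices (levels pairwise disjoint), plus a root level $\Phi_0$ with one vertex; for $x\in\Phi_i$, $y\in\Phi_j$ one has $x<y$ iff $i<j$. For $1\le a\le b$, the layer $\langle\Phi_a\to\Phi_b\rangle$ is the subposet on $\Phi_a\cup\dots\cup\Phi_b$; it has $m=b-a+1$ levels and its maximal chains form the set $\Phi_a\times\dots\times\Phi_b$. For a permutation $\sigma$ of $\{1,\dots,m\}$, a block of type $\sigma P_m$ in this layer is the subposet induced on $V_a\cup\dots\cup V_b$ where $V_{a-1+i}\subseteq\Phi_{a-1+i}$ and $|V_{a-1+i}|=\sigma(i)_F$ for $i=1,\dots,m$; its maximal chains form the set $V_a\times\dots\times V_b$. A tiling of the layer is a finite family of such blocks ($\sigma$ may vary from block to block) whose sets $V_a\times\dots\times V_b$ partition $\Phi_a\times\dots\times\Phi_b$ (pairwise max-disjoint and covering all maximal chains). *)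

From Stdlib Require List.
From mathcomp Require Import all_boot all_fingroup.
Set Implicit Arguments. Unset Strict Implicit. Unset Printing Implicit Defensive.

Fixpoint Fq (q n : nat) : nat :=
  match n with
  | 0 => 0
  | 1 => 1
  | (m.+1 as p).+1 => q * Fq q p + Fq q m
  end.

(* Layer <Phi_a -> Phi_(a+m-1)>, levels indexed by i : 'I_m
   (level i is Phi_(a+i)); the vertices of Phi_s are 0, ..., s_F - 1.
   A maximal chain is a choice c i of one vertex in each level. *)
Definition is_max_chain (q a m : nat) (c : 'I_m -> nat) : Prop :=
  forall i : 'I_m, c i < Fq q (a + i).

(* A block: a permutation sigma of {1..m} (encoded as a permutation of
   'I_m, sigma(i+1) = (s i) + 1) together with the subsets V i of the
   levels (as duplicate-free lists of vertices). *)
Definition block (m : nat) : Type := ({perm 'I_m} * ('I_m -> seq nat))%type.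

Definition is_block (q a m : nat) (B : block m) : Prop :=
  forall i : 'I_m,
    [/\ uniq (B.2 i),
        all (fun x => x < Fq q (a + i)) (B.2 i)
      & size (B.2 i) = Fq q ((B.1 i).+1)].

Definition chain_in (m : nat) (B : block m) (c : 'I_m -> nat) : bool :=
  [forall i : 'I_m, c i \in B.2 i].

Definition is_tiling (q a m : nat) (T : seq (block m)) : Prop :=
  (forall B, List.In B T -> @is_block q a m B) /\
  (forall c, @is_max_chain q a m c -> count (fun B => chain_in B c) T = 1).
Arguments is_max_chain : clear implicits.
Arguments is_block : clear implicits.
Arguments is_tiling : clear implicits.

From mathcomp Require Import all_boot all_fingroup.
From mathcomp Require Import ring.
Set Implicit Arguments. Unset Strict Implicit. Unset Printing Implicit Defensive.

(* We work with "boxes": a box is the list a = [a_0; ...; a_(m-1)] of level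
   sizes (level i has the vertices 0, ..., a_i - 1), its maximal chains are
   the lists c with c_i < a_i, and a block of the box is a list of level
   subsets whose sizes form a rearrangement of a fixed list b of types.
   Tilings of boxes are stable under four operations: the trivial tiling of a
   box by itself, prepending a common level, splitting the first level as
   x + y (hence scaling it by a factor), and cycling the levels.  The
   addition formula F (a + b + 1) = F (a + 1) F (b + 1) + F a F b then lets
   us tile the layer [F (k+1); ...; F (k+m)] by blocks of type
   [F 1; ...; F m] by induction on m and k.  The
   construction works for every q (including q = 0) and every k, m. *)

Lemma Fq_add q a b : Fq q (a + b.+1) = Fq q a.+1 * Fq q b.+1 + Fq q a * Fq q b.
Proof.
elim: b a => [|b IH] a; first by rewrite addn1 muln1 muln0 addn0.
by rewrite -addSnnS IH /=; ring.
Qed.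

Lemma all2_rcons (S T : Type) (r : S -> T -> bool) s t x y :
  size s = size t -> all2 r (rcons s x) (rcons t y) = all2 r s t && r x y.
Proof.
elim: s t => [|u s IH] [|v t] //=; first by rewrite andbT.
by case=> e; rewrite IH // andbA.
Qed.

Lemma all2_size (S T : Type) (r : S -> T -> bool) s t :
  all2 r s t -> size s = size t.
Proof. by rewrite all2E => /andP[/eqP]. Qed.

Lemma all2_ord (S T : Type) {r : S -> T -> bool} (x0 : S) (y0 : T) m s t :
  size s = m -> size t = m ->
  all2 r s t = [forall i : 'I_m, r (nth x0 s i) (nth y0 t i)].
Proof.
move=> sz_s sz_t; rewrite all2E sz_s sz_t eqxx /=.
have sz_st : size (zip s t) = m by rewrite size_zip sz_s sz_t minnn.
apply/(all_nthP (x0, y0))/forallP => [H i | H i lt_im].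
  by have := H i; rewrite sz_st nth_zip ?sz_s ?sz_t //; apply.
by rewrite nth_zip ?sz_s ?sz_t //; rewrite sz_st in lt_im; apply: (H (Ordinal lt_im)).
Qed.

Definition box_chain (a c : seq nat) : bool := all2 (fun x s => x < s) c a.

Definition in_block (c : seq nat) (B : seq (seq nat)) : bool :=
  all2 (fun x V => x \in V) c B.

Definition block_of (a b : seq nat) (B : seq (seq nat)) : bool :=
  all2 (fun V s => uniq V && all (fun x => x < s) V) B a && perm_eq (map size B) b.

Lemma block_of_cons s a b V B :
  block_of (s :: a) b (V :: B) =
  [&& uniq V, all (fun x => x < s) V,
      all2 (fun V s => uniq V && all (fun x => x < s) V) B a
    & perm_eq (map size (V :: B)) b].
Proof. by rewrite /block_of /= -!andbA. Qed.

Definition tiles (a b : seq nat) (T : seq (seq (seq nat))) : Prop :=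
  all (block_of a b) T /\ forall c, box_chain a c -> count (in_block c) T = 1.

Definition tileable (a b : seq nat) : Prop := exists T, tiles a b T.

Lemma tileable_refl a : tileable a a.
Proof.
exists [:: map (iota 0) a]; split.
  rewrite /= andbT /block_of -map_comp (eq_map (size_iota 0)) map_id perm_refl andbT.
  elim: a => //= s a ->; rewrite iota_uniq andbT.
  by apply/allP => x; rewrite mem_iota.
move=> c /= chain_c; rewrite addn0.
suff -> : in_block c (map (iota 0) a) by [].
elim: c a chain_c => [|x c IH] [|s a] //= /andP[lt_xs chain_c].
by rewrite mem_iota lt_xs IH.
Qed.

Lemma tileable_perm a b b' : perm_eq b b' -> tileable a b -> tileable a b'.
Proof.
move=> eq_bb' [T [blocks chains]]; exists T; split => //.
apply/allP => B /(allP blocks) /andP[levels sizes].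
by rewrite /block_of levels (perm_trans sizes eq_bb').
Qed.

Lemma tileable_cons s a b : tileable a b -> tileable (s :: a) (s :: b).
Proof.
move=> [T [blocks chains]]; exists (map (cons (iota 0 s)) T); split.
  rewrite all_map; apply/allP => B /(allP blocks) /andP[levels sizes].
  rewrite /block_of /= iota_uniq levels size_iota perm_cons sizes !andbT.
  by apply/allP => x; rewrite mem_iota add0n; case/andP.
case=> [|z c] //= /andP[lt_zs chain_c]; rewrite count_map -(chains _ chain_c).
by apply: eq_count => B; rewrite /= /in_block /= mem_iota lt_zs.
Qed.

Definition shift_first (x : nat) (B : seq (seq nat)) : seq (seq nat) :=
  if B is V :: B' then map (addn x) V :: B' else B.

(* Boxes glued along their first level: tilings of x :: a and y :: a give a
   tiling of (x + y) :: a, the second one translated by x. *)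
Lemma tileable_add x y a b :
  tileable (x :: a) b -> tileable (y :: a) b -> tileable ((x + y) :: a) b.
Proof.
move=> [T1 [blocks1 chains1]] [T2 [blocks2 chains2]].
exists (T1 ++ map (shift_first x) T2); split.
  rewrite all_cat all_map; apply/andP; split; apply/allP => -[|V B].
  - by move/(allP blocks1).
  - move/(allP blocks1); rewrite !block_of_cons => /and4P[uV ltV levels ->].
    rewrite uV levels !andbT.
    by apply/allP => w /(allP ltV) /= lt_w; apply: leq_trans lt_w (leq_addr _ _).
  - by move/(allP blocks2).
  - move/(allP blocks2).
    change (block_of (y :: a) b (V :: B) ->
            block_of ((x + y) :: a) b (map (addn x) V :: B)).
    rewrite !block_of_cons => /and4P[uV ltV levels sizes].
    rewrite map_inj_uniq ?uV ?levels; last exact: addnI.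
    rewrite [map size _]/= size_map sizes /= andbT all_map.
    by apply/allP => w /(allP ltV) /=; rewrite ltn_add2l.
case=> [|z c] //= /andP[lt_z chain_c]; rewrite count_cat count_map.
case: (ltnP z x) => [lt_zx | le_xz].
  rewrite (chains1 (z :: c)) /=; last by rewrite lt_zx.
  rewrite (@eq_in_count _ _ pred0) ?count_pred0 // => -[|V B] /(allP blocks2) //= _.
  apply/negbTE/negP => /andP[/mapP[w _ z_eq] _].
  by move: lt_zx; rewrite z_eq ltnNge leq_addr.
rewrite (@eq_in_count _ _ pred0 T1) ?count_pred0 ?add0n; last first.
  move=> -[|V B] /(allP blocks1) //= /andP[/andP[/andP[_ ltV] _] _].
  by apply/negbTE/negP => /andP[/(allP ltV) /=]; rewrite ltnNge le_xz.
rewrite -(chains2 ((z - x) :: c)) /=; last by rewrite chain_c andbT ltn_subLR.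
apply: eq_count => -[|V B] //=.
by rewrite /in_block /= -{1}(subnKC le_xz) mem_map //; apply: addnI.
Qed.

(* Iterating the gluing: the first level can be scaled by any factor. *)
Lemma tileable_mul n s a b : tileable (s :: a) b -> tileable (n * s :: a) b.
Proof.
move=> tile_s; elim: n => [|n IH]; last by rewrite mulSn; apply: tileable_add.
by exists [::]; split => // -[|z c].
Qed.

Lemma tileable_rot x a b : tileable (x :: a) b -> tileable (rcons a x) b.
Proof.
move=> [T [blocks chains]]; exists (map (rot 1) T); split.
  rewrite all_map; apply/allP => -[|V B] /(allP blocks) //.
  rewrite block_of_cons => /and4P[uV ltV levels sizes].
  change (block_of (rcons a x) b (rot 1 (V :: B))).
  rewrite /block_of rot1_cons all2_rcons ?(all2_size levels) // levels uV ltV /=.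
  by rewrite map_rcons perm_rcons.
move=> c0; case/lastP: c0 => [|c z] chain_cz.
  by have := all2_size chain_cz; rewrite size_rcons.
have sz_c : size c = size a.
  by have := all2_size chain_cz; rewrite !size_rcons => -[].
rewrite count_map -[RHS](chains (z :: c)); last first.
  by move: chain_cz; rewrite /box_chain all2_rcons //= andbC.
apply: eq_in_count => -[|V B] /(allP blocks) // /andP[levels _].
change (in_block (rcons c z) (rot 1 (V :: B)) = in_block (z :: c) (V :: B)).
rewrite rot1_cons /in_block all2_rcons /= 1?andbC //.
by rewrite sz_c; case: (all2_size levels).
Qed.

Section Layers.

Variable q : nat.
Local Notation F := (Fq q).

(* The level sizes [F (k+1); ...; F (k+m)] of <Phi_(k+1) -> Phi_(k+m)>. *)
Definition layer (k m : nat) : seq nat := [seq F (k + i.+1) | i <- iota 0 m].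

Lemma size_layer k m : size (layer k m) = m.
Proof. by rewrite size_map size_iota. Qed.

Lemma nth_layer k m i : i < m -> nth 0 (layer k m) i = F (k.+1 + i).
Proof. by move=> lt_im; rewrite (nth_map 0) ?size_iota // nth_iota // addSnnS. Qed.

Lemma layer_cons k m : layer k m.+1 = F k.+1 :: layer k.+1 m.
Proof.
have shifted : layer k.+1 m = [seq F (k + i.+1) | i <- iota 1 m].
  by rewrite /layer (iotaDl 1 0) -map_comp; apply: eq_map => i; rewrite addSnnS.
by rewrite shifted -[k.+1]addn1.
Qed.

Lemma layer_rcons k m : layer k m.+1 = rcons (layer k m) (F (k + m.+1)).
Proof. by rewrite /layer -[m.+1]addn1 iotaD map_cat cats1 add0n addn1. Qed.

(* Every layer is tiled by blocks whose types are the levels of the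
   initial layer [F 1; ...; F m].  The inductive step splits the top level
   as F (k+m+2) = F (k+2) F (m+1) + F (k+1) F m. *)
Lemma tileable_layer m k : tileable (layer k m) (layer 0 m).
Proof.
elim: m k => [|m IHm] k; first exact: tileable_refl.
elim: k => [|k IHk]; first exact: tileable_refl.
rewrite layer_rcons; apply: tileable_rot.
rewrite Fq_add; apply: tileable_add.
  apply: tileable_mul; apply: (tileable_perm _ (tileable_cons _ (IHm k.+1))).
  by rewrite layer_rcons add0n perm_sym perm_rcons.
by rewrite mulnC; apply: tileable_mul; rewrite -layer_cons.
Qed.

End Layers.

Section OrdinalTilings.

Variables (q k m : nat).
Local Notation F := (Fq q).

Definition level_sets (B : seq (seq nat)) : 'I_m -> seq nat := fun i => nth [::] B i.

Definition block_type (B : seq (seq nat)) : {perm 'I_m} :=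
  odflt 1%g [pick p : {perm 'I_m} | [forall i, size (level_sets B i) == F (p i).+1]].

Definition to_block (B : seq (seq nat)) : block m := (block_type B, level_sets B).

Lemma layer0_perm (s : seq nat) : perm_eq s (layer q 0 m) ->
  exists p : {perm 'I_m}, forall i : 'I_m, nth 0 s i = F (p i).+1.
Proof.
pose t := [tuple F (val i).+1 | i < m].
have t_layer : val t = layer q 0 m.
  by rewrite [val t]/= /layer -val_enum_ord -map_comp.
rewrite -t_layer => /tuple_permP[p ->]; exists p => i.
by rewrite -tnth_nth tnth_mktuple tnth_mktuple.
Qed.

Lemma to_block_ok B :
  block_of (layer q k m) (layer q 0 m) B -> is_block q k.+1 m (to_block B).
Proof.
case/andP=> levels sizes.
have sz_B : size B = m by rewrite (all2_size levels) size_layer.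
have [p size_p] := layer0_perm sizes.
have type_ok : [forall i, size (level_sets B i) == F (block_type B i).+1].
  have p_ok : [forall i, size (level_sets B i) == F (p i).+1].
    by apply/forallP => i; apply/eqP; rewrite -size_p (nth_map [::]) ?sz_B.
  by rewrite /block_type; case: pickP => [p' // | /(_ p)]; rewrite p_ok.
move=> i; rewrite (all2_ord [::] 0 sz_B (size_layer _ _ _)) in levels.
move: (forallP levels i) (forallP type_ok i) => /andP[uV ltV] /eqP size_i.
by split => //; rewrite -(nth_layer q k (ltn_ord i)).
Qed.

Definition chain_seq (c : 'I_m -> nat) : seq nat := [seq c i | i <- enum 'I_m].

Lemma nth_chain_seq c (i : 'I_m) : nth 0 (chain_seq c) i = c i.
Proof. by rewrite (nth_map i) ?size_enum_ord // nth_ord_enum. Qed.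

Lemma size_chain_seq c : size (chain_seq c) = m.
Proof. by rewrite size_map size_enum_ord. Qed.

Lemma box_chain_layer c :
  is_max_chain q k.+1 m c -> box_chain (layer q k m) (chain_seq c).
Proof.
move=> max_c; rewrite /box_chain (all2_ord 0 0 (size_chain_seq c) (size_layer _ _ _)).
by apply/forallP => i; rewrite nth_chain_seq nth_layer.
Qed.

Lemma in_to_block c B : block_of (layer q k m) (layer q 0 m) B ->
  chain_in (to_block B) c = in_block (chain_seq c) B.
Proof.
case/andP=> levels _; have sz_B : size B = m by rewrite (all2_size levels) size_layer.
rewrite /in_block (all2_ord 0 [::] (size_chain_seq c) sz_B).
by apply: eq_forallb => i; rewrite nth_chain_seq.
Qed.

Lemma In_mem (T : eqType) (x : T) s : List.In x s -> x \in s.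
Proof. by elim: s => //= y s IH [->|/IH]; rewrite inE ?eqxx // orbC => ->. Qed.

Lemma to_tiling T :
  tiles (layer q k m) (layer q 0 m) T -> is_tiling q k.+1 m (map to_block T).
Proof.
move=> [blocks chains]; split.
  move=> B /List.in_map_iff[B0 [<- /In_mem B0_T]].
  exact/to_block_ok/(allP blocks).
move=> c max_c; rewrite count_map -(chains _ (box_chain_layer max_c)).
by apply: eq_in_count => B /(allP blocks) B_ok; rewrite /preim /= in_to_block.
Qed.

End OrdinalTilings.

Theorem mainTheorem8 (q k n : nat) :
  1 <= q -> k < n ->
  exists T : seq (block (n - k)), is_tiling q k.+1 (n - k) T.
Proof.
move=> _ _; have [T tile_T] := tileable_layer q (n - k) k.
by exists (map (to_block q (n - k)) T); apply: to_tiling.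
Qed.
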